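(* Let $g:\{0,1,2,3\}^*\to\{0,1,2,3\}^*$ be the morphism $g(0)=01$, $g(1)=20$, $g(2)=23$, $g(3)=02$, and $\tau$ the coding $\tau(0)=2$, $\tau(1)=1$, $\tau(2)=0$, $\tau(3)=1$; let $\mathbf{vtm}=\tau(g^\omega(0))=2102012101202102012021012102012\cdots$ (an infinite word over $\{0,1,2\}$). Let $\sigma:\{0,1,2\}^*\to\{0,1\}^*$ be the morphism $\sigma(0)=00011001011000111001011001110001011100101100010111$, $\sigma(1)=00011001011000101110010110011100010110001110010111$, $\sigma(2)=00011001011000101110010110001110010111000101100111$. Then $\sigma(\mathbf{vtm})$ is a $2$-automatic word containing only three distinct squares, and it is generated by a $2$-automaton with $109$ states (so it has weight $2\cdot 109=218$).
   Context: A square is a nonempty word $xx$; ''containing'' means as a factor. $g^\omega(0)$ denotes the infinite fixed point of $g$ starting with $0$. An infinite word is $k$-automatic if it is generated by a $k$-automaton (DFAO), i.e. a deterministic finite automaton with output which, given the base-$k$ representation of $n$ (most significant digit first), outputs the $n$th letter; equivalently, it is the image under a coding of a fixed point of a $k$-uniform morphism. The weight of a $k$-automatic word generated by a $k$-automaton with $s$ states (equivalently, the weight of the corresponding $k$-uniform morphism on $s$ letters) is $k\cdot s$. *)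

From mathcomp Require Import all_boot.
Set Implicit Arguments. Unset Strict Implicit. Unset Printing Implicit Defensive.

Definition word := nat -> nat.

Definition morph_apply (h : nat -> seq nat) (u : seq nat) : seq nat :=
  flatten (map h u).

(* g^omega(a), for a prolongable morphism with |h(b)| >= 2 for every letter:
   the n-th letter of the limit of h^k(a) is the n-th letter of h^(n+1)(a). *)
Definition fixpt (h : nat -> seq nat) (a : nat) : word :=
  fun n => nth 0 (iter n.+1 (morph_apply h) [:: a]) n.

(* image of an infinite word under a non-erasing morphism: the n-th letter is
   read off the image of the prefix of length n+1. *)
Definition morph_inf (h : nat -> seq nat) (w : word) : word :=
  fun n => nth 0 (morph_apply h (mkseq w n.+1)) n.

Definition g (a : nat) : seq nat :=
  match a with
  | 0 => [:: 0; 1]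
  | 1 => [:: 2; 0]
  | 2 => [:: 2; 3]
  | _ => [:: 0; 2]
  end.

Definition tau (a : nat) : nat :=
  match a with 0 => 2 | 1 => 1 | 2 => 0 | _ => 1 end.

Definition vtm : word := fun n => tau (fixpt g 0 n).

Definition sigma (a : nat) : seq nat :=
  match a with
  | 0 => [:: 0; 0; 0; 1; 1; 0; 0; 1; 0; 1; 1; 0; 0; 0; 1; 1; 1; 0; 0; 1; 0; 1; 1; 0; 0; 1; 1; 1; 0; 0; 0; 1; 0; 1; 1; 1; 0; 0; 1; 0; 1; 1; 0; 0; 0; 1; 0; 1; 1; 1]
  | 1 => [:: 0; 0; 0; 1; 1; 0; 0; 1; 0; 1; 1; 0; 0; 0; 1; 0; 1; 1; 1; 0; 0; 1; 0; 1; 1; 0; 0; 1; 1; 1; 0; 0; 0; 1; 0; 1; 1; 0; 0; 0; 1; 1; 1; 0; 0; 1; 0; 1; 1; 1]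
  | _ => [:: 0; 0; 0; 1; 1; 0; 0; 1; 0; 1; 1; 0; 0; 0; 1; 0; 1; 1; 1; 0; 0; 1; 0; 1; 1; 0; 0; 0; 1; 1; 1; 0; 0; 1; 0; 1; 1; 1; 0; 0; 0; 1; 0; 1; 1; 0; 0; 1; 1; 1]
  end.

Definition factor_of (u : seq nat) (w : word) : Prop :=
  exists i, forall j, j < size u -> w (i + j) = nth 0 u j.

Definition is_square (u : seq nat) : Prop :=
  exists x : seq nat, x != [::] /\ u = x ++ x.

(* the canonical base-k representation of n, most significant digit first;
   the representation of 0 is the empty word *)
Definition base_repr (k n : nat) : seq nat :=
  if n == 0 then [::]
  else rev [seq (n %/ k ^ i) %% k | i <- iota 0 (trunc_log k n).+1].

(* Only digits < k are ever read. *)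
Definition generated_by_DFAO (k s : nat) (w : word) : Prop :=
  exists (q0 : 'I_s) (delta : 'I_s -> nat -> 'I_s) (out : 'I_s -> nat),
    forall n, w n = out (foldl delta q0 (base_repr k n)).

Definition automatic (k : nat) (w : word) : Prop :=
  exists s, generated_by_DFAO k s w.

From mathcomp Require Import all_boot zify.
Set Implicit Arguments. Unset Strict Implicit. Unset Printing Implicit Defensive.

(* The word w = sigma (vtm) is the image of u = g^omega(0) under the 100-uniform morphism
   sigma o tau o g.  Since g is injective on last letters and factors of length 3 of u
   determine the parity of their position, a square of u of period p >= 4 desubstitutes to
   a square of period p / 2; hence u is square-free, and in the same way u has no "near
   squares".  A factor of length 135 of w determines its position mod 100, so a square of
   w of period p >= 135 has p = 100 q, and its blocks desubstitute to a square or a near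
   square of u.  Squares of period < 135 sit inside images of factors of length 4 of u and
   are found by enumeration: 00, 11 and 0101.  Finally w(n) only depends on u(n / 50) and
   n mod 50, which a 200-state 2-automaton computes; it collapses to 109 states. *)

(** * Uniform morphisms, windows and squares *)

Lemma morph_apply_cat (h : nat -> seq nat) (v w : seq nat) :
  morph_apply h (v ++ w) = morph_apply h v ++ morph_apply h w.
Proof. by rewrite /morph_apply map_cat flatten_cat. Qed.

Definition morph_image (k : nat) (h : nat -> seq nat) (y x : word) : Prop :=
  forall n, x n = nth 0 (h (y (n %/ k))) (n %% k).

Lemma morph_image_nth k h (y x : word) n r : 0 < k -> morph_image k h y x -> r < k ->
  x (k * n + r) = nth 0 (h (y n)) r.
Proof.
move=> k_gt0 hx lt_rk.
by rewrite hx [k * n]mulnC divnMDl ?modnMDl ?divn_small ?modn_small ?addn0.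
Qed.

Definition window (x : word) (i m : nat) : seq nat := mkseq (fun j => x (i + j)) m.

Lemma size_window x i m : size (window x i m) = m.
Proof. exact: size_mkseq. Qed.

Lemma nth_window x i m j : j < m -> nth 0 (window x i m) j = x (i + j).
Proof. exact: nth_mkseq. Qed.

Lemma window_cat x i m n : window x i (m + n) = window x i m ++ window x (i + m) n.
Proof.
apply: (@eq_from_nth _ 0); rewrite ?size_cat !size_window // => j lt_j.
rewrite nth_cat size_window nth_window //; case: ltnP => [lt_jm | le_mj].
  by rewrite nth_window.
have -> : i + j = i + m + (j - m) by lia.
by rewrite nth_window //; lia.
Qed.

Lemma take_window x i m r : r <= m -> take r (window x i m) = window x i r.
Proof. by move=> le_rm; rewrite -(subnKC le_rm) window_cat take_size_cat ?size_window. Qed.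

Lemma drop_window x i m r : r <= m -> drop r (window x i m) = window x (i + r) (m - r).
Proof. by move=> le_rm; rewrite -{1}(subnKC le_rm) window_cat drop_size_cat ?size_window. Qed.

Definition square_at (x : word) (i p : nat) : Prop :=
  forall j, j < p -> x (i + j) = x (i + p + j).

Lemma square_at_window x i p a L : square_at x i p -> i <= a -> a + L <= i + p ->
  window x a L = window x (a + p) L.
Proof.
move=> sq le_ia le_aL; apply: (@eq_from_nth _ 0); rewrite !size_window // => j lt_jL.
rewrite !nth_window //.
have -> : a + j = i + (a - i + j) by lia.
have -> : a + p + j = i + p + (a - i + j) by lia.
by apply: sq; lia.
Qed.

Lemma factor_ofP f x : factor_of f x <-> exists i, window x i (size f) = f.
Proof.
split=> [[i occ] | [i eq_f]]; last by exists i => j lt_j; rewrite -eq_f nth_window.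
by exists i; apply: (@eq_from_nth _ 0); rewrite ?size_window // => j lt_j; rewrite nth_window ?occ.
Qed.

Lemma factor_of_square_at v x : factor_of (v ++ v) x ->
  exists i, square_at x i (size v) /\ window x i (size v + size v) = v ++ v.
Proof.
case/factor_ofP=> i; rewrite size_cat => occ; exists i; split=> //.
have /andP [/eqP occ_l /eqP occ_r] :
    (window x i (size v) == v) && (window x (i + size v) (size v) == v).
  by rewrite -eqseq_cat ?size_window // -window_cat occ.
move=> j lt_j; rewrite -(nth_window x i lt_j) -(nth_window x (i + size v) lt_j).
by rewrite occ_l occ_r.
Qed.

Definition squareb (f : seq nat) : bool :=
  (0 < size f) && (take (size f)./2 f == drop (size f)./2 f).

Lemma squareP f : reflect (is_square f) (squareb f).
Proof.
apply: (iffP andP) => [[f_gt0 /eqP eq_half] | [v [v_nil ->]]].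
  exists (take (size f)./2 f); split; last by rewrite {2}eq_half cat_take_drop.
  apply: contraTneq f_gt0 => half_nil; rewrite -(cat_take_drop (size f)./2 f) -eq_half.
  by rewrite half_nil.
rewrite size_cat addnn doubleK take_size_cat ?drop_size_cat //.
by rewrite double_gt0 lt0n size_eq0.
Qed.

Lemma square_at_window_cat x i p : square_at x i p ->
  window x i (p + p) = window x i p ++ window x i p.
Proof. by move=> sq; rewrite window_cat (square_at_window sq) ?addn0. Qed.

Section UniformMorphism.

Variables (k : nat) (h : nat -> seq nat).
Hypothesis size_h : forall a, size (h a) = k.

Lemma size_morph_apply v : size (morph_apply h v) = k * size v.
Proof.
elim: v => [|a v IHv]; first by rewrite muln0.
by rewrite -cat1s morph_apply_cat size_cat IHv /morph_apply /= cats0 size_h mulnS.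
Qed.

Lemma nth_morph_apply v n r : n < size v -> r < k ->
  nth 0 (morph_apply h v) (k * n + r) = nth 0 (h (nth 0 v n)) r.
Proof.
elim: v n => [|a v IHv] [|n] //= lt_nv lt_rk; rewrite -cat1s morph_apply_cat nth_cat.
- by rewrite /morph_apply /= cats0 size_h muln0 lt_rk.
- rewrite /morph_apply /= cats0 size_h ifN; last by rewrite -leqNgt; lia.
  by rewrite mulnS -addnA addKn IHv.
Qed.

Lemma morph_inf_image (y : word) : 0 < k -> morph_image k h y (morph_inf h y).
Proof.
move=> k_gt0 n; have le_nk : n %/ k < n.+1 by rewrite ltnS leq_div.
rewrite /morph_inf -(nth_mkseq 0 y le_nk) -nth_morph_apply ?size_mkseq ?ltn_mod //.
by rewrite mulnC -divn_eq.
Qed.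

Lemma morph_image_map (c : nat -> nat) (y x : word) : 0 < k ->
  morph_image k h y x -> morph_image k (map c \o h) y (c \o x).
Proof. by move=> k_gt0 hx n; rewrite /= hx (nth_map 0) // size_h ltn_mod. Qed.

Lemma morph_image_comp k' (h' : nat -> seq nat) (z y x : word) :
  0 < k -> 0 < k' -> (forall a, size (h' a) = k') ->
  morph_image k h y x -> morph_image k' h' z y ->
  morph_image (k * k') (morph_apply h \o h') z x.
Proof.
move=> k_gt0 k'_gt0 size_h' hx hy n; rewrite hx hy /= -divnMA.
set N := n %% (k * k').
have -> : n %/ k %% k' = N %/ k by rewrite modn_divl mulnC.
have -> : n %% k = N %% k by rewrite modn_dvdm // dvdn_mulr.
have lt_N : N %/ k < k' by rewrite ltn_divLR // [k' * k]mulnC ltn_mod muln_gt0 k_gt0.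
by rewrite -nth_morph_apply ?size_h' ?ltn_mod // [k * (N %/ k)]mulnC -divn_eq.
Qed.

Lemma window_image (y x : word) t r L m : 0 < k -> morph_image k h y x ->
  r + L <= k * m -> window x (k * t + r) L = take L (drop r (morph_apply h (window y t m))).
Proof.
move=> k_gt0 hx le_rL.
have size_img : size (morph_apply h (window y t m)) = k * m
  by rewrite size_morph_apply size_window.
apply: (@eq_from_nth _ 0).
  by rewrite size_window size_take size_drop size_img; case: ltnP => //; lia.
move=> j; rewrite size_window => lt_jL.
have lt_q : (r + j) %/ k < m by rewrite ltn_divLR // mulnC; lia.
rewrite nth_window // nth_take // nth_drop (divn_eq (r + j) k) [_ * k]mulnC.
rewrite nth_morph_apply ?ltn_mod ?size_window // nth_window // hx -addnA [k * t]mulnC.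
by rewrite divnMDl // modnMDl.
Qed.

Lemma morph_image_block (y x : word) t : 0 < k -> morph_image k h y x ->
  h (y t) = window x (k * t) k.
Proof.
move=> k_gt0 hx; rewrite -[k * t]addn0 (@window_image y x t 0 k 1) ?muln1 // drop0.
by rewrite /window /mkseq /= addn0 /morph_apply /= cats0 take_oversize ?size_h.
Qed.

(* A factor of length m at offset e < k of a block lies in the image of a factor of
   length ceil ((e + m) / k). *)
Definition factor_closed (F : nat -> seq (seq nat)) (M : nat) : bool :=
  all (fun m => all (fun e => all (fun f => take m (drop e (morph_apply h f)) \in F m)
    (F ((e + m).-1 %/ k).+1)) (iota 0 k)) (iota 1 M).

Lemma window_in_factors (x : word) (F : nat -> seq (seq nat)) M :
  1 < k -> morph_image k h x x -> factor_closed F M ->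
  (forall m, 0 < m <= M -> window x 0 m \in F m) ->
  forall i m, 0 < m <= M -> window x i m \in F m.
Proof.
move=> k_gt1 hx closed prefix; elim/ltn_ind=> i IHi m m_bnd.
have [-> | i_gt0] := posnP i; first exact: prefix.
have k_gt0 : 0 < k by apply: ltnW.
set e := i %% k; set m' := ((e + m).-1 %/ k).+1.
have lt_e : e < k by rewrite ltn_mod.
have le_em : e + m <= k * m' by rewrite mulnC; have := ltn_ceil (e + m).-1 k_gt0; lia.
have m'_bnd : 0 < m' <= M by rewrite /= ltn_divLR //; nia.
rewrite (divn_eq i k) mulnC -/e (window_image _ k_gt0 hx le_em).
have := IHi (i %/ k) (ltn_Pdiv k_gt1 i_gt0) m' m'_bnd.
move/allP: closed => /(_ m); rewrite mem_iota => /(_ ltac:(lia)) /allP.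
by move=> /(_ e); rewrite mem_iota => /(_ lt_e) /allP; apply.
Qed.

Definition synchronizing (G : seq (seq nat)) (L : nat) : bool :=
  let V := [seq morph_apply h f | f <- G] in
  all (fun v1 => all (fun v2 => all (fun r1 => all (fun r2 =>
    (r1 == r2) || (take L (drop r1 v1) != take L (drop r2 v2))) (iota 0 k)) (iota 0 k)) V) V.

Lemma window_sync (y x : word) (G : seq (seq nat)) L m i j :
  0 < k -> morph_image k h y x -> (forall t, window y t m \in G) ->
  k.-1 + L <= k * m -> synchronizing G L ->
  window x i L = window x j L -> i %% k = j %% k.
Proof.
move=> k_gt0 hx G_y le_Lm sync.
have img n : window x n L = take L (drop (n %% k) (morph_apply h (window y (n %/ k) m))).
  have le_rL : n %% k + L <= k * m by have := ltn_mod n k; lia.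
  by rewrite {1}(divn_eq n k) mulnC (window_image _ k_gt0 hx le_rL).
have V_y t : morph_apply h (window y t m) \in [seq morph_apply h f | f <- G] by apply: map_f.
have lt_mod n : n %% k \in iota 0 k by rewrite mem_iota ltn_mod k_gt0.
rewrite !img => eq_ij.
move/allP: sync => /(_ _ (V_y (i %/ k))) /allP /(_ _ (V_y (j %/ k))) /allP.
by move=> /(_ _ (lt_mod i)) /allP /(_ _ (lt_mod j)); rewrite eq_ij eqxx orbF => /eqP.
Qed.

Lemma square_at_block (y x : word) i q n : 0 < k -> morph_image k h y x ->
  square_at x i (k * q) -> i <= k * n -> k * n + k <= i + k * q -> h (y n) = h (y (n + q)).
Proof.
move=> k_gt0 hx sq le_in le_ni.
by rewrite !(morph_image_block _ k_gt0 hx) mulnDr (square_at_window sq).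
Qed.

Section Desubstitution.

Variables (y x : word) (s : nat).
Hypotheses (k_gt0 : 0 < k) (hx : morph_image k h y x) (y_lt : forall n, y n < s).
Hypothesis h_last_inj : forall a b, a < s -> b < s ->
  nth 0 (h a) k.-1 = nth 0 (h b) k.-1 -> a = b.

Lemma morph_image_last_inj n n' : x (k * n + k.-1) = x (k * n' + k.-1) -> y n = y n'.
Proof.
by rewrite !(morph_image_nth _ k_gt0 hx) ?prednK // => /h_last_inj; apply.
Qed.

Lemma square_at_desubst i q : square_at x i (k * q) -> square_at y (i %/ k) q.
Proof.
move=> sq j lt_jq; apply: morph_image_last_inj.
have lt_kj : k * j.+1 <= k * q by rewrite leq_mul2l lt_jq orbT.
have := ltn_mod i k; have := divn_eq i k; rewrite [_ * k]mulnC => i_eq lt_r.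
have -> : k * (i %/ k + j) + k.-1 = i + (k * j + k.-1 - i %% k) by lia.
have -> : k * (i %/ k + q + j) + k.-1 = i + k * q + (k * j + k.-1 - i %% k) by lia.
by apply: sq; lia.
Qed.

End Desubstitution.

Section FixedPoint.

Variable a : nat.
Hypotheses (k_gt1 : 1 < k) (h_prolongable : nth 0 (h a) 0 = a).

Let lt_pow_succ n : n < k ^ n.+1 :=
  leq_trans (ltn_expl n k_gt1) (leq_pexp2l (ltnW k_gt1) (leqnSn n)).

Lemma size_iter_morph j : size (iter j (morph_apply h) [:: a]) = k ^ j.
Proof. by elim: j => [|j IHj] //=; rewrite size_morph_apply IHj expnS. Qed.

Lemma iter_morph_prefix j :
  exists s, iter j.+1 (morph_apply h) [:: a] = iter j (morph_apply h) [:: a] ++ s.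
Proof.
elim: j => [|j [s IHs]].
  rewrite /= /morph_apply /= cats0.
  have: size (h a) > 0 by rewrite size_h ltnW.
  by case: (h a) h_prolongable => [|b s] //= ->; exists s.
exists (morph_apply h s).
change (morph_apply h (iter j.+1 (morph_apply h) [:: a]) =
  iter j.+1 (morph_apply h) [:: a] ++ morph_apply h s).
by rewrite IHs morph_apply_cat; congr (_ ++ _); exact: IHs.
Qed.

Lemma nth_iter_morph_stable i j n : i <= j -> n < k ^ i ->
  nth 0 (iter j (morph_apply h) [:: a]) n = nth 0 (iter i (morph_apply h) [:: a]) n.
Proof.
move=> le_ij lt_n; elim: j le_ij => [|j IHj]; first by rewrite leqn0 => /eqP ->.
rewrite leq_eqVlt ltnS => /orP[/eqP -> // | le_ij].
have [s ->] := iter_morph_prefix j.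
have lt_nj : n < k ^ j := leq_trans lt_n (leq_pexp2l (ltnW k_gt1) le_ij).
by rewrite nth_cat size_iter_morph lt_nj IHj.
Qed.

Lemma fixpt_iter j n : n < k ^ j -> fixpt h a n = nth 0 (iter j (morph_apply h) [:: a]) n.
Proof.
move=> lt_nj; have lt_n := lt_pow_succ n.
rewrite /fixpt -(@nth_iter_morph_stable n.+1 (maxn j n.+1)) ?leq_maxr //.
by rewrite (@nth_iter_morph_stable j) ?leq_maxl.
Qed.

Lemma fixpt_image : morph_image k h (fixpt h a) (fixpt h a).
Proof.
have k_gt0 : 0 < k by apply: ltnW.
have lt_n n : n %/ k < k ^ n by rewrite ltn_divLR // -expnSr.
move=> n; rewrite (fixpt_iter (lt_n n)) -nth_morph_apply ?size_iter_morph ?ltn_mod //.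
by rewrite mulnC -divn_eq.
Qed.

End FixedPoint.

End UniformMorphism.

(** * Automata reading base-k representations *)

Lemma base_repr_rcons k n : 1 < k -> 0 < n ->
  base_repr k n = rcons (base_repr k (n %/ k)) (n %% k).
Proof.
move=> k_gt1 n_gt0; have k_gt0 := ltnW k_gt1.
rewrite /base_repr (gtn_eqF n_gt0).
have [lt_nk | le_kn] := ltnP n k.
  have /eqP -> : trunc_log k n == 0 by rewrite trunc_log_eq0; apply/orP; right; lia.
  by rewrite (divn_small lt_nk) /= expn0 divn1.
have q_gt0 : 0 < n %/ k by rewrite divn_gt0.
rewrite (gtn_eqF q_gt0); set t := trunc_log k (n %/ k).
have -> : trunc_log k n = t.+1.
  have /andP [lo hi] := trunc_log_bounds k_gt1 q_gt0.
  apply: trunc_log_eq => //.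
  by rewrite [k ^ t.+1]expnSr [k ^ t.+2]expnSr -leq_divRL // -ltn_divLR // lo.
rewrite -[iota 0 t.+2]/(0 :: iota (1 + 0) t.+1) iotaDl map_cons rev_cons expn0 divn1 -map_comp.
by congr (rcons (rev _) _); apply: eq_map => j /=; rewrite add1n expnS divnMA.
Qed.

Lemma foldl_base_repr k (T : Type) (delta : T -> nat -> T) (f : nat -> T) :
  1 < k -> (forall n, 0 < n -> f n = delta (f (n %/ k)) (n %% k)) ->
  forall n, foldl delta (f 0) (base_repr k n) = f n.
Proof.
move=> k_gt1 f_rec; elim/ltn_ind=> n IHn; have [-> // | n_gt0] := posnP n.
by rewrite base_repr_rcons // -cats1 foldl_cat IHn ?ltn_Pdiv // (f_rec _ n_gt0).
Qed.

Lemma generated_by_DFAO_rec k s (w : word) (c : nat -> nat) (delta : nat -> nat -> nat)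
    (out : nat -> nat) :
  1 < k -> (forall n, c n < s) ->
  (forall n, 0 < n -> c n = delta (c (n %/ k)) (n %% k)) ->
  (forall n, w n = out (c n)) -> generated_by_DFAO k s w.
Proof.
case: s => [|s] k_gt1 c_lt c_rec w_out; first by have := c_lt 0.
exists (inord (c 0)), (fun q d => inord (delta q d)), out => n.
rewrite (foldl_base_repr (f := fun n => inord (c n) : 'I_s.+1)) ?inordK ?w_out //.
by move=> m m_gt0; rewrite inordK // c_rec.
Qed.

(** * The fixed point u of g *)

Notation u := (fixpt g 0).

Lemma size_g a : size (g a) = 2.
Proof. by case: a => [|[|[|a]]]. Qed.

Lemma u_image : morph_image 2 g u u.
Proof. exact: (fixpt_image size_g). Qed.

Lemma u_lt4 n : u n < 4.
Proof. by rewrite u_image; move: (u _) (n %% 2) => [|[|[|a]]] [|[|r]] /=; rewrite ?nth_nil. Qed.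

Lemma u_nth n r : r < 2 -> u (2 * n + r) = nth 0 (g (u n)) r.
Proof. exact: (morph_image_nth (k := 2) n isT u_image). Qed.

Lemma g_last_inj a b : a < 4 -> b < 4 -> nth 0 (g a) 1 = nth 0 (g b) 1 -> a = b.
Proof. by case: a b => [|[|[|[|a]]]] [|[|[|[|b]]]]. Qed.

Definition u_prefix : seq nat := iter 7 (morph_apply g) [:: 0].

Definition u_factors (m : nat) : seq (seq nat) :=
  undup [seq take m (drop i u_prefix) | i <- iota 0 (size u_prefix - m).+1].

Lemma u_window_factor i m : 0 < m <= 7 -> window u i m \in u_factors m.
Proof.
move: i m; apply: (window_in_factors size_g (F := u_factors) (M := 7) isT u_image).
  by vm_compute.
move=> m' m'_bnd; rewrite mem_undup; apply/mapP; exists 0; first by rewrite mem_iota.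
have size_prefix : size u_prefix = 2 ^ 7 by [].
apply: (@eq_from_nth _ 0); rewrite size_window ?drop0 ?size_takel ?size_prefix //; first lia.
move=> j lt_jm; rewrite nth_window // nth_take // (fixpt_iter size_g _ _ (j := 7)) //; lia.
Qed.

Lemma u_factors_square_free m f : 0 < m <= 7 -> f \in u_factors m -> ~~ squareb f.
Proof.
have : all (fun m => all (predC squareb) (u_factors m)) (iota 1 7) by vm_compute.
move=> /allP all_sqf m_bnd f_in.
by have /allP := all_sqf m ltac:(rewrite mem_iota; lia); apply.
Qed.

Lemma u_sync i j : window u i 3 = window u j 3 -> i %% 2 = j %% 2.
Proof.
apply: (window_sync size_g (G := u_factors 2) (L := 3) (m := 2) isT u_image _ isT).
  by move=> t; apply: u_window_factor.
by vm_compute.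
Qed.

Lemma u_square_free i p : 0 < p -> ~ square_at u i p.
Proof.
elim/ltn_ind: p i => p IHp i p_gt0 sq.
have [lt_p4 | le_4p] := ltnP p 4.
  have p2_bnd : 0 < p + p <= 7 by lia.
  have /negP := u_factors_square_free p2_bnd (u_window_factor i p2_bnd); apply.
  apply/squareP; exists (window u i p); rewrite (square_at_window_cat sq); split => //.
  by rewrite -size_eq0 size_window -lt0n.
have /u_sync sync : window u i 3 = window u (i + p) 3.
  by apply: (square_at_window sq) => //; lia.
have p_even : p = 2 * (p %/ 2) by lia.
apply: (IHp (p %/ 2) ltac:(lia) (i %/ 2) ltac:(lia)).
by apply: (square_at_desubst (k := 2) isT u_image u_lt4 g_last_inj); rewrite -p_even.
Qed.

(* The triples (a, b, c) with a != b != c such that a proper suffix of sigma_tau_g a equals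
   the suffix of the same length of sigma_tau_g b, and the complementary prefix of
   sigma_tau_g b equals that of sigma_tau_g c: see sigma_tau_g_overlap. *)
Definition overlap_triple (a b c : nat) : bool :=
  (a, b, c) \in [:: (0, 2, 1); (2, 0, 3); (1, 3, 0); (3, 1, 2)].

(* What a square of w of period 100 q becomes in u when it starts and ends strictly inside
   blocks and the three blocks involved carry pairwise distinct letters. *)
Definition near_square_at (x : word) (t p : nat) : Prop :=
  (forall j, 0 < j < p -> x (t + j) = x (t + p + j)) /\
  overlap_triple (x t) (x (t + p)) (x (t + 2 * p)).

Definition near_squareb (f : seq nat) (p : nat) : bool :=
  all (fun j => nth 0 f j == nth 0 f (p + j)) (iota 1 p.-1) &&
  overlap_triple (nth 0 f 0) (nth 0 f p) (nth 0 f (2 * p)).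

Lemma near_square_at_window x t p : near_square_at x t p ->
  near_squareb (window x t (2 * p).+1) p.
Proof.
move=> [agree triple]; rewrite /near_squareb !nth_window ?addn0 ?triple ?andbT; try lia.
apply/allP => j; rewrite mem_iota => j_bnd.
by rewrite !nth_window 1?addnA ?agree //; lia.
Qed.

Lemma overlap_triple_desubst a b c : a < 4 -> b < 4 -> c < 4 ->
  overlap_triple (nth 0 (g a) 1) (nth 0 (g b) 1) (nth 0 (g c) 1) ->
  nth 0 (g b) 0 = nth 0 (g c) 0 -> overlap_triple a b c.
Proof. by case: a b c => [|[|[|[|a]]]] [|[|[|[|b]]]] [|[|[|[|c]]]]. Qed.

Lemma u_no_near_square t p : 0 < p -> ~ near_square_at u t p.
Proof.
elim/ltn_ind: p t => p IHp t p_gt0 [agree triple].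
have [lt_p4 | le_4p] := ltnP p 4.
  have f_in : window u t (2 * p).+1 \in u_factors (2 * p).+1 by apply: u_window_factor; lia.
  have : all (fun p => all (fun f => ~~ near_squareb f p) (u_factors (2 * p).+1)) [:: 1; 2; 3].
    by vm_compute.
  move=> /allP /(_ p) /(_ ltac:(rewrite !inE; lia)) /allP /(_ _ f_in) /negP; apply.
  exact: near_square_at_window.
have /u_sync sync : window u (t + 1) 3 = window u (t + 1 + p) 3.
  apply: (@eq_from_nth _ 0); rewrite !size_window // => j lt_j3.
  rewrite !nth_window // -[t + 1 + j]addnA.
  have -> : t + 1 + p + j = t + p + (1 + j) by lia.
  by rewrite agree //; lia.
set q := p %/ 2; set s := t %/ 2.
have p_even : p = 2 * q by rewrite /q; lia.
have u_last n n' : u (2 * n + 1) = u (2 * n' + 1) -> u n = u n'.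
  exact: (morph_image_last_inj (k := 2) isT u_image u_lt4 g_last_inj).
have [t_even | t_odd] : t = 2 * s \/ t = 2 * s + 1 by rewrite /s; lia.
  have q_gt0 : 0 < q by lia.
  apply: (u_square_free (i := s) q_gt0) => j lt_jq.
  apply: u_last.
  have -> : 2 * (s + j) + 1 = t + (2 * j + 1) by lia.
  have -> : 2 * (s + q + j) + 1 = t + p + (2 * j + 1) by lia.
  by apply: agree; lia.
apply: (IHp q ltac:(lia) s ltac:(lia)); split.
  move=> j j_bnd; apply: u_last.
  have -> : 2 * (s + j) + 1 = t + 2 * j by lia.
  have -> : 2 * (s + q + j) + 1 = t + p + 2 * j by lia.
  by apply: agree; lia.
apply: (overlap_triple_desubst (u_lt4 _) (u_lt4 _) (u_lt4 _)); rewrite -!u_nth //.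
  have -> : 2 * s + 1 = t by lia.
  have -> : 2 * (s + q) + 1 = t + p by lia.
  by have -> : 2 * (s + 2 * q) + 1 = t + 2 * p by lia.
have -> : 2 * (s + q) + 0 = t + (p - 1) by lia.
have -> : 2 * (s + 2 * q) + 0 = t + p + (p - 1) by lia.
by apply: agree; lia.
Qed.

(** * Squares of w = sigma (vtm) *)

Notation w := (morph_inf sigma vtm).

Definition sigma_tau_g (a : nat) : seq nat := morph_apply sigma (map tau (g a)).

Lemma size_sigma a : size (sigma a) = 50.
Proof. by case: a => [|[|a]]. Qed.

Lemma size_sigma_tau_g a : size (sigma_tau_g a) = 100.
Proof. by case: a => [|[|[|a]]]. Qed.

Lemma sigma_tau_g_inj a b : a < 4 -> b < 4 -> sigma_tau_g a = sigma_tau_g b -> a = b.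
Proof. by case: a b => [|[|[|[|a]]]] [|[|[|[|b]]]]. Qed.

Lemma w_image_vtm : morph_image 50 sigma vtm w.
Proof. exact: (morph_inf_image size_sigma). Qed.

Lemma w_image : morph_image 100 sigma_tau_g u w.
Proof.
have vtm_image : morph_image 2 (map tau \o g) u vtm := morph_image_map size_g tau isT u_image.
have size_tau_g a : size ((map tau \o g) a) = 2 by rewrite /= size_map size_g.
exact: (morph_image_comp size_sigma (k' := 2) isT isT size_tau_g w_image_vtm vtm_image).
Qed.

Lemma w_sync i j : window w i 135 = window w j 135 -> i %% 100 = j %% 100.
Proof.
apply: (window_sync size_sigma_tau_g (G := u_factors 3) (L := 135) (m := 3) isT w_image _ isT).
  by move=> t; apply: u_window_factor.
by vm_compute.
Qed.

Definition small_squares : seq (seq nat) := [:: [:: 0; 0]; [:: 1; 1]; [:: 0; 1; 0; 1]].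

Lemma w_small_square i p : 0 < p < 135 -> square_at w i p ->
  window w i (p + p) \in small_squares.
Proof.
move=> p_bnd sq.
have sq_win : squareb (window w i (p + p)).
  apply/squareP; exists (window w i p); rewrite (square_at_window_cat sq); split => //.
  by rewrite -size_eq0 size_window -lt0n; case/andP: p_bnd.
have lt_r : i %% 100 < 100 by rewrite ltn_mod.
have le_rp : i %% 100 + (p + p) <= 100 * 4 by lia.
move: sq_win; rewrite (divn_eq i 100) mulnC (window_image size_sigma_tau_g _ isT w_image le_rp).
have : all (fun v => all (fun r => all (fun p =>
    let f := take (p + p) (drop r v) in squareb f ==> (f \in small_squares))
    (iota 1 134)) (iota 0 100)) [seq morph_apply sigma_tau_g f | f <- u_factors 4].
  by vm_compute.
move=> /allP /(_ _ (map_f _ (u_window_factor (i %/ 100) (isT : 0 < 4 <= 7)))).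
move=> /allP /(_ (i %% 100)); rewrite mem_iota lt_r => /(_ isT) /allP /(_ p).
by rewrite mem_iota => /(_ ltac:(lia)) /implyP.
Qed.

Lemma sigma_tau_g_overlap a b c r : a < 4 -> b < 4 -> c < 4 -> 0 < r < 100 ->
  a != b -> b != c -> drop r (sigma_tau_g a) = drop r (sigma_tau_g b) ->
  take r (sigma_tau_g b) = take r (sigma_tau_g c) -> overlap_triple a b c.
Proof.
move=> a_lt b_lt c_lt r_bnd neq_ab neq_bc /eqP eq_drop /eqP eq_take.
have : all (fun a => all (fun b => all (fun c => all (fun r =>
    [&& a != b, b != c, drop r (sigma_tau_g a) == drop r (sigma_tau_g b)
      & take r (sigma_tau_g b) == take r (sigma_tau_g c)] ==> overlap_triple a b c)
    (iota 1 99)) (iota 0 4)) (iota 0 4)) (iota 0 4) by vm_compute.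
have in_iota n m : n < m -> n \in iota 0 m by rewrite mem_iota.
move=> /allP /(_ a (in_iota _ _ a_lt)) /allP /(_ b (in_iota _ _ b_lt)).
move=> /allP /(_ c (in_iota _ _ c_lt)) /allP /(_ r) /(_ ltac:(rewrite mem_iota; lia)).
by rewrite neq_ab neq_bc eq_drop eq_take => /implyP; apply.
Qed.

Lemma w_no_aligned_square i q : 1 < q -> ~ square_at w i (100 * q).
Proof.
move=> q_gt1 sq; set t := i %/ 100; set r := i %% 100.
have i_eq : i = 100 * t + r by rewrite /t /r; lia.
have lt_r : r < 100 by rewrite ltn_mod.
have le_r : r <= 100 by lia.
have q_gt0 : 0 < q by lia.
have block n : i <= 100 * n -> 100 * n + 100 <= i + 100 * q -> u n = u (n + q).
  move=> le_in le_ni; apply: sigma_tau_g_inj (u_lt4 _) (u_lt4 _) _.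
  exact: (square_at_block size_sigma_tau_g isT w_image sq).
have [r0 | r_gt0] := posnP r.
  apply: (u_square_free (i := t) q_gt0) => j lt_jq.
  by rewrite [t + q + j]addnAC block; lia.
set a := u t; set b := u (t + q); set c := u (t + 2 * q).
have [eq_ab | neq_ab] := eqVneq a b.
  apply: (u_square_free (i := t) q_gt0) => [[|j]] lt_jq; first by rewrite !addn0; exact: eq_ab.
  by rewrite [t + q + _]addnAC block; lia.
have [eq_bc | neq_bc] := eqVneq b c.
  apply: (u_square_free (i := t.+1) q_gt0) => j lt_jq.
  have [lt_j | ge_j] := ltnP j q.-1; first by rewrite [t.+1 + q + j]addnAC block; lia.
  have -> : t.+1 + j = t + q by lia.
  have -> : t.+1 + q + j = t + 2 * q by lia.
  exact: eq_bc.
have w_block n : sigma_tau_g (u n) = window w (100 * n) 100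
  := morph_image_block size_sigma_tau_g n isT w_image.
have eq_drop : drop r (sigma_tau_g a) = drop r (sigma_tau_g b).
  rewrite !w_block !drop_window //.
  have -> : 100 * t + r = i by lia.
  have -> : 100 * (t + q) + r = i + 100 * q by lia.
  by apply: (square_at_window sq); lia.
have eq_take : take r (sigma_tau_g b) = take r (sigma_tau_g c).
  rewrite !w_block !take_window //.
  have -> : 100 * (t + q) = i + (100 * q - r) by lia.
  have -> : 100 * (t + 2 * q) = i + (100 * q - r) + 100 * q by lia.
  by apply: (square_at_window sq); lia.
apply: (@u_no_near_square t q q_gt0); split.
  by move=> j j_bnd; rewrite [t + q + j]addnAC block; lia.
by apply: sigma_tau_g_overlap (u_lt4 _) (u_lt4 _) (u_lt4 _) _ neq_ab neq_bc eq_drop eq_take; lia.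
Qed.

Lemma w_no_large_square i p : 135 <= p -> ~ square_at w i p.
Proof.
move=> le_p sq.
have /w_sync sync : window w i 135 = window w (i + p) 135.
  by apply: (square_at_window sq); lia.
have p_eq : p = 100 * (p %/ 100) by lia.
by apply: (@w_no_aligned_square i (p %/ 100)); [lia | rewrite -p_eq].
Qed.

(** * A 109-state automaton for w *)

Definition w_state (n : nat) : nat := 50 * u (n %/ 50) + n %% 50.

Definition w_state_step (c d : nat) : nat :=
  let r := 2 * (c %% 50) + d in 50 * nth 0 (g (c %/ 50)) (r %/ 50) + r %% 50.

Definition w_state_out (c : nat) : nat := nth 0 (sigma (tau (c %/ 50))) (c %% 50).

Lemma w_state_lt n : w_state n < 200.
Proof. by have := u_lt4 (n %/ 50); have := ltn_pmod n (isT : 0 < 50); rewrite /w_state; lia. Qed.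

Lemma w_state_rec n : 0 < n -> w_state n = w_state_step (w_state (n %/ 2)) (n %% 2).
Proof.
move=> n_gt0; rewrite /w_state_step /w_state.
have := u_lt4 (n %/ 2 %/ 50); have := ltn_pmod (n %/ 2) (isT : 0 < 50) => lt_r lt_u.
have -> : (50 * u (n %/ 2 %/ 50) + n %/ 2 %% 50) %/ 50 = u (n %/ 2 %/ 50) by lia.
have -> : (50 * u (n %/ 2 %/ 50) + n %/ 2 %% 50) %% 50 = n %/ 2 %% 50 by lia.
rewrite -u_nth; last by lia.
by congr (50 * u _ + _); lia.
Qed.

Lemma w_state_output n : w n = w_state_out (w_state n).
Proof.
rewrite w_image_vtm /w_state_out /w_state /vtm.
have := u_lt4 (n %/ 50); have := ltn_pmod n (isT : 0 < 50) => lt_r lt_u.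
have -> : (50 * u (n %/ 50) + n %% 50) %/ 50 = u (n %/ 50) by lia.
by have -> : (50 * u (n %/ 50) + n %% 50) %% 50 = n %% 50 by lia.
Qed.

(* A 109-state quotient of that automaton: dfa_class maps each state to its class, and
   dfa_delta0, dfa_delta1, dfa_out are the transitions and outputs on the classes. *)
Definition dfa_class : seq nat :=
  [:: 0; 1; 2; 3; 4; 5; 6; 7; 8; 9; 10; 11; 12; 13; 14; 15; 16; 17; 18; 19; 20; 21; 22;
      23; 24; 25; 26; 27; 28; 29; 30; 31; 32; 33; 34; 35; 36; 37; 38; 39; 40; 41; 42; 43;
      44; 45; 46; 47; 48; 49; 25; 26; 27; 28; 29; 50; 31; 51; 52; 53; 35; 54; 55; 56; 57;
      58; 41; 59; 60; 61; 62; 63; 64; 65; 66; 0; 1; 67; 3; 4; 5; 6; 68; 69; 70; 10; 71;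
      12; 13; 72; 73; 16; 17; 74; 19; 75; 76; 77; 23; 24; 25; 26; 27; 28; 29; 50; 31; 51;
      52; 53; 35; 54; 55; 56; 57; 78; 41; 79; 80; 81; 62; 63; 82; 83; 84; 85; 86; 67; 87;
      88; 5; 89; 68; 69; 9; 10; 11; 12; 90; 72; 91; 92; 93; 94; 95; 96; 97; 98; 99; 100;
      0; 1; 2; 3; 4; 5; 6; 7; 8; 9; 10; 11; 12; 13; 14; 15; 16; 17; 18; 19; 20; 21; 22;
      23; 24; 25; 26; 101; 28; 29; 50; 31; 102; 103; 104; 35; 105; 55; 56; 106; 78; 41;
      59; 80; 61; 107; 108; 82; 65; 66].

Definition dfa_delta0 : seq nat :=
  [:: 0; 2; 4; 6; 8; 10; 12; 14; 16; 18; 20; 22; 24; 26; 28; 30; 32; 34; 36; 38; 40; 42;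
      44; 46; 48; 25; 27; 29; 31; 52; 35; 55; 57; 41; 60; 62; 64; 66; 1; 3; 5; 68; 70;
      71; 13; 73; 17; 19; 76; 23; 35; 57; 41; 80; 82; 84; 86; 87; 5; 9; 11; 90; 91; 93;
      95; 97; 99; 4; 14; 16; 18; 22; 28; 30; 36; 40; 42; 44; 5; 9; 11; 90; 95; 97; 99; 0;
      2; 6; 8; 12; 26; 50; 102; 104; 105; 56; 78; 59; 61; 108; 65; 29; 57; 41; 80; 82;
      87; 91; 93].

Definition dfa_delta1 : seq nat :=
  [:: 1; 3; 5; 7; 9; 11; 13; 15; 17; 19; 21; 23; 25; 27; 29; 31; 33; 35; 37; 39; 41; 43;
      45; 47; 49; 26; 28; 50; 51; 53; 54; 56; 58; 59; 61; 63; 65; 0; 67; 4; 6; 69; 10;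
      12; 72; 16; 74; 75; 77; 24; 54; 78; 79; 81; 83; 85; 67; 88; 89; 10; 12; 72; 92; 94;
      96; 98; 100; 5; 15; 17; 19; 23; 29; 31; 37; 41; 43; 45; 89; 10; 12; 72; 96; 98;
      100; 1; 3; 7; 9; 13; 101; 31; 103; 35; 55; 106; 41; 80; 107; 82; 66; 50; 78; 79;
      81; 83; 88; 92; 94].

Definition dfa_out : seq nat :=
  [:: 0; 0; 0; 1; 1; 0; 0; 1; 0; 1; 1; 0; 0; 0; 1; 0; 1; 1; 1; 0; 0; 1; 0; 1; 1; 0; 0; 0;
      1; 1; 1; 0; 0; 1; 0; 1; 1; 1; 0; 0; 0; 1; 0; 1; 1; 0; 0; 1; 1; 1; 0; 1; 0; 1; 0; 0;
      0; 1; 0; 1; 1; 0; 0; 1; 0; 1; 1; 1; 0; 1; 0; 1; 0; 1; 0; 1; 0; 1; 1; 0; 0; 1; 1; 0;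
      0; 1; 1; 0; 0; 1; 1; 1; 1; 0; 0; 0; 1; 0; 1; 1; 1; 1; 0; 1; 0; 1; 0; 1; 0].

Definition dfa_delta (q d : nat) : nat := nth 0 (if d == 0 then dfa_delta0 else dfa_delta1) q.

Lemma dfa_class_ok c : c < 200 ->
  [&& nth 0 dfa_class c < 109, nth 0 dfa_out (nth 0 dfa_class c) == w_state_out c &
      all (fun d => nth 0 dfa_class (w_state_step c d) == dfa_delta (nth 0 dfa_class c) d)
        [:: 0; 1]].
Proof.
have : all (fun c => [&& nth 0 dfa_class c < 109,
    nth 0 dfa_out (nth 0 dfa_class c) == w_state_out c &
    all (fun d => nth 0 dfa_class (w_state_step c d) == dfa_delta (nth 0 dfa_class c) d)
      [:: 0; 1]]) (iota 0 200) by vm_compute.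
by move=> /allP ok lt_c; apply: ok; rewrite mem_iota.
Qed.

Lemma w_dfao : generated_by_DFAO 2 109 w.
Proof.
apply: (generated_by_DFAO_rec (k := 2) (c := fun n => nth 0 dfa_class (w_state n))
  (delta := dfa_delta) (out := nth 0 dfa_out) isT).
- by move=> n; case/and3P: (dfa_class_ok (w_state_lt n)).
- move=> n n_gt0; rewrite w_state_rec //.
  case/and3P: (dfa_class_ok (w_state_lt (n %/ 2))) => _ _ /allP step.
  by apply/eqP/step; rewrite !inE; case: (n %% 2) (ltn_pmod n (isT : 0 < 2)) => [|[|]].
- by move=> n; case/and3P: (dfa_class_ok (w_state_lt n)) => _ /eqP -> _; apply: w_state_output.
Qed.

Lemma w_squares f : is_square f /\ factor_of f w <-> f \in small_squares.
Proof.
split=> [[[v [v_nil ->]] occ] | f_in].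
  have [i [sq win]] := factor_of_square_at occ.
  have [lt_v | ge_v] := ltnP (size v) 135; last by case: (w_no_large_square ge_v sq).
  by rewrite -win; apply: w_small_square sq; rewrite lt_v lt0n size_eq0 v_nil.
split; first by apply/squareP; move: f_in; rewrite !inE => /or3P [] /eqP ->.
apply/factor_ofP; move: f_in; rewrite !inE => /or3P [] /eqP ->.
- by exists 0; vm_compute.
- by exists 3; vm_compute.
- by exists 6; vm_compute.
Qed.

Theorem theorem2 :
  let w := morph_inf sigma vtm in
  automatic 2 w /\
  (exists S : seq (seq nat),
      uniq S /\ size S = 3 /\
      forall u, (is_square u /\ factor_of u w) <-> u \in S) /\
  generated_by_DFAO 2 109 w.
Proof.
move=> w; split; first by exists 109; exact: w_dfao.
split; last exact: w_dfao.
by exists small_squares; do 2!split=> //; apply: w_squares.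
Qed.
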